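(* Let $\tau,t\in\mathbb{R}$ and let $P_n(x;\tau,t)$ be the monic orthogonal polynomials for the weight $\omega(x;\tau,t)=\exp(-x^6+\tau x^4+tx^2)$ on $\mathbb{R}$, with recurrence coefficients $\beta_n$. Then for $n\ge1$ $$\frac{dP_n}{dx}(x;\tau,t)=-B_n(x;\tau,t)P_n(x;\tau,t)+A_n(x;\tau,t)P_{n-1}(x;\tau,t),$$ where $$A_n(x;\tau,t)=\beta_n\big\{6x^4-4\tau x^2-2t+(6x^2-4\tau)(\beta_n+\beta_{n+1})\big\}+6\beta_n\big\{\beta_n(\beta_{n-1}+\beta_n+\beta_{n+1})+\beta_{n+1}(\beta_n+\beta_{n+1}+\beta_{n+2})\big\},$$ $$B_n(x;\tau,t)=\beta_n\big\{6x^3-4\tau x+6x(\beta_{n-1}+\beta_n+\beta_{n+1})\big\}.$$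
   Context: The monic polynomials $P_n(x;\tau,t)$ of exact degree $n$ are orthogonal with respect to $\omega(x;\tau,t)$ on $\mathbb{R}$. They satisfy $P_{n+1}(x)=xP_n(x)-\beta_nP_{n-1}(x)$ with $P_{-1}=0$, $P_0=1$, where $\beta_n>0$ for $n\ge1$. The convention $\beta_0=0$ is used. *)

From HB Require Import structures.
From mathcomp Require Import all_boot all_order all_algebra.
From mathcomp Require Import all_classical all_reals all_analysis.
Set Implicit Arguments. Unset Strict Implicit. Unset Printing Implicit Defensive.
Import Order.TTheory GRing.Theory Num.Theory.
Local Open Scope ring_scope.

Definition weight (R : realType) (tau t : R) (x : R) : R :=
  expR (- x ^+ 6 + tau * x ^+ 4 + t * x ^+ 2).

Definition monic_OPS (R : realType) (tau t : R) (P : nat -> {poly R}) : Prop :=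
  (forall n, P n \is monic /\ size (P n) = n.+1) /\
  (forall n m, n <> m ->
     (\int[@lebesgue_measure R]_(x in [set: R])
         ((P n).[x] * (P m).[x] * weight tau t x)%:E = 0)%E).

(* beta are the recurrence coefficients: P_{n+1} = x P_n - beta_n P_{n-1},
   with P_{-1} = 0 and the convention beta_0 = 0. *)
Definition recurrence_coeffs (R : realType) (P : nat -> {poly R}) (beta : nat -> R)
  : Prop :=
  beta 0%N = 0 /\
  P 1%N = 'X * P 0%N /\
  (forall n, (1 <= n)%N -> P n.+1 = 'X * P n - beta n *: P n.-1).

From HB Require Import structures.
From mathcomp Require Import all_boot all_order all_algebra.
From mathcomp Require Import all_classical all_reals all_analysis.
From mathcomp Require Import ring lra zify measurable_realfun.
Import Order.TTheory GRing.Theory Num.Theory.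
Import numFieldNormedType.Exports.
Local Open Scope classical_set_scope.
Local Open Scope ring_scope.

(* With V(x) = x^6 - tau x^4 - t x^2 the weight is exp(-V), and integration by
   parts gives L(p') = L(p V') for the functional L(p) = int p exp(-V); the
   boundary terms vanish because p exp(-V) is dominated by a Gaussian.
   Put Q = P_n' + B_n P_n - A_n P_{n-1}, of degree at most n + 3.  By the
   identity above, L(P_n' P_j) is L(V' P_n P_j) for j < n and 0 otherwise, so
   each L(Q P_j) is a combination of moments L(x^a P_k P_j), which the
   three-term recurrence expresses through the beta_i and the norms
   h_j = L(P_j^2), where h_{j+1} = beta_{j+1} h_j.  For j <= n + 3 this
   combination vanishes identically (a finite check on j - n), so Q is
   orthogonal to P_0, ..., P_{n+3} and hence zero. *)

(** * Moments of a three-term recurrence *)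

(* [moment b h a k j] is L('X^a P_k P_j) for any family with
   'X P_j = P_{j+1} + b_j P_{j-1} and L(P_k P_j) = (k == j) h_j. *)
Fixpoint moment {R : nzRingType} (b h : nat -> R) (a k j : nat) : R :=
  if a is a'.+1 then moment b h a' k j.+1 + b j * moment b h a' k j.-1
  else if k == j then h j else 0.

Lemma moment_eq0 {R : nzRingType} (b h : nat -> R) a k j :
  (a < k - j)%N -> moment b h a k j = 0.
Proof.
elim: a j => [|a IH] j /= ltakj; last by rewrite !IH ?mulr0 ?addr0 //; lia.
by case: eqP => // eqkj; move: ltakj; rewrite eqkj subnn.
Qed.

Definition sextic_potential {R : comNzRingType} (tau t : R) : {poly R} :=
  'X^6 - tau *: 'X^4 - t *: 'X^2.

Definition ladderB {R : comNzRingType} (b : nat -> R) (tau : R) n : {poly R} :=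
  b n *: (6 *: 'X^3 + (6 * (b n.-1 + b n + b n.+1) - 4 * tau) *: 'X).

Definition ladderA {R : comNzRingType} (b : nat -> R) (tau t : R) n : {poly R} :=
  b n *: (6 *: 'X^4 + (6 * (b n + b n.+1) - 4 * tau) *: 'X^2
          + (6 * (b n * (b n.-1 + b n + b n.+1) + b n.+1 * (b n + b n.+1 + b n.+2))
             - 4 * tau * (b n + b n.+1) - 2 * t)%:P).

Ltac decide_nat_tests := repeat match goal with
  | |- context [(?x == ?y)%N] =>
      first [ rewrite (eqxx x) | have -> : (x == y) = false by (apply/eqP; lia) ]
  | |- context [(?x < ?y)%N] =>
      first [ have -> : (x < y)%N = true by lia
            | have -> : (x < y)%N = false by (apply/negbTE; lia) ]
  end.

Lemma size_ladderB {R : comNzRingType} (b : nat -> R) tau n :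
  (size (ladderB b tau n) <= 4)%N.
Proof.
apply/leq_sizeP => i lei.
rewrite /ladderB !(coefZ, coefD, coefXn, coefX); decide_nat_tests; rewrite /=; ring.
Qed.

Lemma size_ladderA {R : comNzRingType} (b : nat -> R) tau t n :
  (size (ladderA b tau t n) <= 5)%N.
Proof.
apply/leq_sizeP => i lei.
rewrite /ladderA !(coefZ, coefD, coefXn, coefC); decide_nat_tests; rewrite /=; ring.
Qed.

Lemma size_sextic_potential_deriv {R : comNzRingType} (tau t : R) :
  (size (sextic_potential tau t)^`() <= 6)%N.
Proof.
apply/leq_sizeP => i lei.
rewrite coef_deriv /sextic_potential !(coefB, coefZ, coefXn).
by decide_nat_tests; rewrite /=; ring.
Qed.

Section LadderResidual.
Context {R : comNzRingType} (b h : nat -> R) (tau t : R).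
Hypothesis b0 : b 0%N = 0.
Hypothesis h_succ : forall k, h k.+1 = b k.+1 * h k.

(* L(Q P_j) for Q = P_n' + B_n P_n - A_n P_{n-1}, through moments; the first
   summand is L(P_n' P_j), cf. [L_derivPP] below. *)
Definition ladder_residual m j : R :=
  let n := m.+1 in
  (if (j < n)%N then \sum_(i < 6) (sextic_potential tau t)^`()`_i * moment b h i n j
   else 0)
  + \sum_(i < 4) (ladderB b tau n)`_i * moment b h i n j
  - \sum_(i < 5) (ladderA b tau t n)`_i * moment b h i m j.

Ltac eval_moments :=
  rewrite ?addnS ?addn0 /=; decide_nat_tests; rewrite ?h_succ ?b0; ring.

Lemma ladder_residual_eq0 m j : (j < m + 5)%N -> ladder_residual m j = 0.
Proof.
move=> ltj; rewrite /ladder_residual.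
have [far|near] := leqP (j + 5) m.
  rewrite ifT; last lia.
  rewrite !big1 ?addr0 ?subr0 // => i _;
    by rewrite moment_eq0 ?mulr0 //; have := ltn_ord i; lia.
(* Now |j - m| <= 4; small base indices are split off so that every [_.-1]
   occurring in the moments reduces. *)
rewrite !big_ord_recr !big_ord0 /=.
rewrite !(coef_deriv, coefZ, coefD, coefB, coefN, coefXn, coefX, coefC) /=.
have [le_jm|lt_mj] := leqP j m.
- have [d le_d4 ->] : exists2 d, (d <= 4)%N & m = (j + d)%N by exists (m - j)%N; lia.
  case: d le_d4 => [|[|[|[|[|]]]]] // _;
    by case: j {ltj near le_jm} => [|[|[|[|[|j]]]]]; eval_moments.
- have [d le_d3 ->] : exists2 d, (d <= 3)%N & j = (m + d.+1)%N by exists (j - m)%N.-1; lia.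
  case: d le_d3 => [|[|[|[|]]]] // _;
    by case: m {ltj near lt_mj} => [|[|[|[|[|m]]]]]; eval_moments.
Qed.
End LadderResidual.

(** * Orthogonal polynomials for a functional with L(p') = L(p V') *)

Section MonicBasis.
Context {R : comNzRingType} {P : nat -> {poly R}}.
Hypothesis P_monic : forall n, P n \is monic.
Hypothesis size_P : forall n, size (P n) = n.+1.

Lemma size_sub_lead_P N (q : {poly R}) :
  (size q <= N.+1)%N -> (size (q - q`_N *: P N)%R <= N)%N.
Proof.
move=> /leq_sizeP q_small; apply/leq_sizeP => i le_Ni; rewrite coefB coefZ.
have [->|ne_iN] := eqVneq i N.
  have -> : (P N)`_N = lead_coef (P N) by rewrite lead_coefE size_P.
  by rewrite (monicP (P_monic N)) mulr1 subrr.
have lt_Ni : (N < i)%N by rewrite ltn_neqAle eq_sym ne_iN.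
by rewrite (q_small i) // [(P N)`_i]nth_default ?size_P // mulr0 subr0.
Qed.

Lemma monic_basis N (q : {poly R}) :
  (size q <= N)%N -> exists c : nat -> R, q = \sum_(i < N) c i *: P i.
Proof.
elim: N q => [|N IH] q szq.
  by exists (fun=> 0); rewrite big_ord0; apply/eqP; rewrite -size_poly_eq0 -leqn0.
have [c q_low] := IH _ (size_sub_lead_P _ _ szq).
exists (fun i => if i == N then q`_N else c i).
rewrite big_ord_recr /= eqxx.
under eq_bigr => i _ do rewrite ltn_eqF //.
by rewrite -q_low subrK.
Qed.

End MonicBasis.

Section OrthogonalFamily.
Variables (R : numDomainType) (tau t : R) (L : {scalar {poly R}}).
Variables (P : nat -> {poly R}) (b : nat -> R).
Hypothesis L_deriv : forall p, L p^`() = L (p * (sextic_potential tau t)^`()).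
Hypothesis P_monic : forall n, P n \is monic.
Hypothesis size_P : forall n, size (P n) = n.+1.
Hypothesis L_orth : forall n m, n <> m -> L (P n * P m) = 0.
Hypothesis L1_gt0 : 0 < L 1.
Hypothesis b0 : b 0%N = 0.
Hypothesis P1 : P 1%N = 'X * P 0%N.
Hypothesis P_rec : forall n, (1 <= n)%N -> P n.+1 = 'X * P n - b n *: P n.-1.
Hypothesis b_gt0 : forall n, (1 <= n)%N -> 0 < b n.

Let sqnorm j := L (P j * P j).

Lemma mulX_P k : 'X * P k = P k.+1 + b k *: P k.-1.
Proof.
case: k => [|k]; first by rewrite b0 P1 scale0r addr0.
by rewrite (P_rec k.+1) //= subrK.
Qed.

Lemma L_XnPP a k j : L ('X^a * P k * P j) = moment b sqnorm a k j.
Proof.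
elim: a j => [|a IH] j /=.
  rewrite expr0 mul1r; case: eqP => [->|ne_kj] //; exact: L_orth.
rewrite -IH -IH -linearZ -linearD /=; congr (L _).
rewrite -mul_polyC (_ : P j.+1 = 'X * P j - (b j)%:P * P j.-1) ?exprS; first ring.
by rewrite mulX_P -mul_polyC addrK.
Qed.

Lemma sqnorm_succ k : sqnorm k.+1 = b k.+1 * sqnorm k.
Proof.
transitivity (L ('X^1 * P k.+1 * P k)); last rewrite mulrAC.
all: by rewrite L_XnPP /=; decide_nat_tests; ring.
Qed.

Lemma P0_eq1 : P 0%N = 1.
Proof.
rewrite [LHS](size1_polyC (eq_leq (size_P 0))).
have -> : (P 0%N)`_0 = lead_coef (P 0%N) by rewrite lead_coefE size_P.
by rewrite (monicP (P_monic 0)).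
Qed.

Lemma sqnorm_gt0 k : 0 < sqnorm k.
Proof.
elim: k => [|k IH]; first by rewrite /sqnorm P0_eq1 mulr1.
by rewrite sqnorm_succ mulr_gt0 // b_gt0.
Qed.

Lemma L_mulPP {p : {poly R}} {N} : (size p <= N)%N ->
  forall k j, L (p * P k * P j) = \sum_(i < N) p`_i * moment b sqnorm i k j.
Proof.
move=> szp k j; have p_sum : p = \sum_(i < N) p`_i *: 'X^i.
  rewrite -poly_def; apply/polyP => i; rewrite coef_poly.
  by case: ltnP => // le_Ni; rewrite nth_default // (leq_trans szp).
rewrite {1}p_sum !mulr_suml linear_sum; apply: eq_bigr => i _.
by rewrite -!scalerAl linearZ /= L_XnPP.
Qed.

Lemma L_P_mul_lowdeg n (q : {poly R}) : (size q <= n)%N -> L (P n * q) = 0.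
Proof.
move=> /(monic_basis P_monic size_P) [c ->].
rewrite mulr_sumr linear_sum big1 // => i _.
by rewrite -scalerAr linearZ /= L_orth ?mulr0 //; have := ltn_ord i; lia.
Qed.

Lemma orthogonal_eq0 N (q : {poly R}) : (size q <= N)%N ->
  (forall j, (j < N)%N -> L (q * P j) = 0) -> q = 0.
Proof.
move=> /(monic_basis P_monic size_P) [c ->] orth.
suff c0 j : (j < N)%N -> c j = 0 by rewrite big1 // => i _; rewrite c0 ?scale0r.
move=> ltjN; have := orth j ltjN.
rewrite mulr_suml linear_sum (bigD1 (Ordinal ltjN)) //= big1 => [|i ne_ij]; last first.
  rewrite -scalerAl linearZ /= L_orth ?mulr0 // => eq_ij.
  by move/eqP: ne_ij; apply; apply: val_inj.
rewrite addr0 -scalerAl linearZ /= => /eqP; rewrite mulf_eq0 => /orP[/eqP //|].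
by rewrite gt_eqF ?sqnorm_gt0.
Qed.

Lemma size_deriv_P k : (size (P k)^`() <= k)%N.
Proof. by rewrite -ltnS -(size_P k) lt_size_deriv ?monic_neq0. Qed.

Lemma L_derivPP n j : L ((P n)^`() * P j) =
  if (j < n)%N then L ((sextic_potential tau t)^`() * P n * P j) else 0.
Proof.
case: ltnP => [lt_jn|le_nj].
  have := L_deriv (P n * P j); rewrite derivM linearD /= L_P_mul_lowdeg; last first.
    exact: leq_trans (size_deriv_P j) (ltnW lt_jn).
  by rewrite addr0 => ->; congr (L _); ring.
by rewrite mulrC L_P_mul_lowdeg // (leq_trans (size_deriv_P n)).
Qed.

Lemma ladder_identity m :
  (P m.+1)^`() = ladderA b tau t m.+1 * P m - ladderB b tau m.+1 * P m.+1.
Proof.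
set n := m.+1; set A := ladderA b tau t n; set B := ladderB b tau n.
suff Q0 : (P n)^`() + B * P n - A * P m = 0 by rewrite -[LHS]subr0 -Q0; ring.
apply: (orthogonal_eq0 (m + 5)%N).
  have size_AP : (size (A * P m)%R <= m + 5)%N.
    have szA : (size A <= 5)%N := size_ladderA b tau t n.
    by rewrite (leq_trans (size_polyMleq _ _)) // size_P; lia.
  have size_BP : (size (B * P n)%R <= m + 5)%N.
    have szB : (size B <= 4)%N := size_ladderB b tau n.
    by rewrite (leq_trans (size_polyMleq _ _)) // size_P /n; lia.
  have size_dP : (size (P n)^`() <= m + 5)%N.
    by rewrite (leq_trans (size_deriv_P n)) // /n; lia.
  rewrite (leq_trans (size_polyD _ _)) // geq_max size_polyN size_AP andbT.
  by rewrite (leq_trans (size_polyD _ _)) // geq_max size_dP size_BP.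
move=> j ltj.
rewrite -(ladder_residual_eq0 b sqnorm tau t b0 sqnorm_succ m j ltj) /ladder_residual.
rewrite !mulrBl !mulrDl !(linearB L) !(linearD L) L_derivPP.
rewrite (L_mulPP (size_sextic_potential_deriv tau t)) (L_mulPP (size_ladderB b tau n)).
by rewrite (L_mulPP (size_ladderA b tau t n)).
Qed.

End OrthogonalFamily.

(** * Integration against the weight exp(-V) *)

Section IntegralOfDerivative.
Context {R : realType}.
Local Notation mu := (@lebesgue_measure R).

Lemma cvg_integral_sym_itv (f : R -> R) : mu.-integrable [set: R] (EFin \o f) ->
  (\int[mu]_(x in `[(- k.+1%:R)%R, k.+1%:R]) (f x)%:E)%E @[k --> \oo]
    --> (\int[mu]_x (f x)%:E)%E.
Proof.
move=> intf; pose f_ k := (EFin \o f) \_ `[- k.+1%:R, k.+1%:R].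
have mf_ k : measurable_fun [set: R] (f_ k).
  apply: (measurable_restrictT (EFin \o f) (measurable_itv _)).1.
  exact: measurable_funTS (measurable_int mu intf).
have f_f x : [set: R] x -> f_ ^~ x @ \oo --> (EFin \o f) x.
  move=> _; apply: cvg_near_cst; exists (Num.bound `|x|) => // k /= le_bk.
  rewrite /f_ patchE ifT //; apply: mem_set; rewrite /= in_itv /= -ler_norml.
  by apply: le_trans (ltW (archi_boundP (normr_ge0 x))) _; rewrite ler_nat leqW.
have abs_f_ k x : [set: R] x -> (`|f_ k x| <= `|(f x)%:E|)%E.
  by move=> _; rewrite /f_ patchE; case: ifP => _ //; rewrite abse0 abse_ge0.
have fin_f x : [set: R] x -> (abse \o (EFin \o f)) x \is a fin_num by [].
rewrite (_ : (fun k => _) = fun k => \int[mu]_x f_ k x)%E; last first.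
  by apply/funext => k; rewrite integral_mkcond.
exact: (@dominated_cvg _ _ _ mu _ measurableT _ _ _ mf_ f_f fin_f (integrable_abse intf)).
Qed.

Lemma integral_derivative_eq0 (F f : R -> R) :
  (forall x, is_derive x (1 : R) F (f x)) -> continuous f ->
  mu.-integrable [set: R] (EFin \o f) ->
  F x @[x --> +oo] --> 0 -> F x @[x --> -oo] --> 0 ->
  (\int[mu]_x (f x)%:E = 0)%E.
Proof.
move=> dF cf intf Fy FNy.
have cF : continuous F.
  by move=> x; apply/differentiable_continuous/derivable1_diffP; case: (dF x).
have FTC k : (\int[mu]_(x in `[(- k.+1%:R)%R, k.+1%:R]) (f x)%:E
              = (F k.+1%:R - F (- k.+1%:R))%:E)%E.
  have lt_kk : - k.+1%:R < k.+1%:R :> R by rewrite gtrN ?ltr0Sn.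
  rewrite (continuous_FTC2 (F := F)) ?EFinB //; first exact: continuous_subspaceT.
  - split; first by move=> x _; case: (dF x).
    + exact/cvg_at_right_filter/cF.
    + exact/cvg_at_left_filter/cF.
  - by move=> x _; case: (dF x) => _ <-; rewrite derive1E.
have n1y : (k.+1%:R : R) @[k --> \oo] --> +oo := cvg_comp _ _ (cvg_addnl 1) cvgr_idn.
have cvg_F : ((F k.+1%:R - F (- k.+1%:R))%:E)%E @[k --> \oo] --> 0%E.
  apply: cvg_EFin; first exact: nearW.
  rewrite -(subr0 0); apply: cvgB; first exact: cvg_comp n1y Fy.
  exact: cvg_comp n1y ((cvgNy_compNP F _).1 FNy).
have := cvg_integral_sym_itv f intf; under eq_fun do rewrite FTC.
by move/cvg_unique; apply.
Qed.
End IntegralOfDerivative.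

Lemma cubic_bounded_above {R : realFieldType} (a s : R) :
  exists C, forall u, 0 <= u -> - u ^+ 3 + a * u ^+ 2 + s * u <= C.
Proof.
pose M := 1 + `|a| + `|s|.
exists (`|a| * M ^+ 2 + `|s| * M) => u u_ge0.
have a_le : a * u ^+ 2 <= `|a| * u ^+ 2 by rewrite ler_wpM2r ?sqr_ge0 ?ler_norm.
have s_le : s * u <= `|s| * u by rewrite ler_wpM2r ?ler_norm.
have a_ge0 := normr_ge0 a; have s_ge0 := normr_ge0 s.
have [u_le|M_lt] := leP u M.
  have : `|a| * u ^+ 2 <= `|a| * M ^+ 2 by rewrite ler_wpM2l // ler_sqr ?nnegrE; lra.
  have : `|s| * u <= `|s| * M by rewrite ler_wpM2l.
  have : 0 <= u ^+ 3 by rewrite exprn_ge0.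
  lra.
have : (1 + `|a| + `|s|) * u ^+ 2 <= u ^+ 3.
  by rewrite [u ^+ 3]exprS ler_wpM2r ?sqr_ge0 ?ltW.
rewrite !mulrDl mul1r => ?.
have u_ge1 : 1 <= u by move: M_lt; rewrite /M; lra.
have : `|s| * u <= `|s| * u ^+ 2 by rewrite ler_wpM2l // expr2 ler_peMr.
have : 0 <= `|a| * M ^+ 2 + `|s| * M by rewrite addr_ge0 ?mulr_ge0 ?sqr_ge0 // /M; lra.
have := sqr_ge0 u; lra.
Qed.

Lemma norm_le_expR_sqr {R : realType} (x : R) : `|x| <= expR (x ^+ 2).
Proof.
apply: le_trans (expR_ge1Dx _).
rewrite -(real_normK (num_real x)); have := sqr_ge0 (`|x| - 1); have := normr_ge0 x; nra.
Qed.

Lemma norm_horner_le_expR {R : realType} (p : {poly R}) x :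
  `|p.[x]| <= (\sum_(i < size p) `|p`_i|) * expR ((size p)%:R * x ^+ 2).
Proof.
rewrite horner_coef mulr_suml (le_trans (ler_norm_sum _ _ _)) //; apply: ler_sum => i _.
rewrite normrM normrX ler_wpM2l // expRM_natl.
apply: le_trans (_ : expR (x ^+ 2) ^+ i <= _).
  by rewrite lerXn2r ?nnegrE ?expR_ge0 ?norm_le_expR_sqr.
by rewrite -!expRM_natl ler_expR ler_wpM2r ?sqr_ge0 // ler_nat ltnW.
Qed.

Lemma norm_le_cvg0 {R : realFieldType} {T} {F : set_system T} {FF : Filter F}
    (f g : T -> R) :
  (forall x, `|f x| <= g x) -> g @ F --> 0 -> f @ F --> 0.
Proof.
move=> fg g0; apply: (@squeeze_cvgr _ _ _ _ (- g) g); last exact: g0.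
  by apply: nearW => x; rewrite -ler_norml.
by rewrite -oppr0; exact: cvgN.
Qed.

Lemma cvgNy_gauss_fun {R : realType} : gauss_fun x @[x --> -oo] --> (0 : R).
Proof.
apply/cvgNy_compNP; rewrite (_ : _ \o _ = gauss_fun); first exact: cvg_gauss_fun.
by apply/funext => x; rewrite /= /gauss_fun sqrrN.
Qed.

Section SexticWeight.
Context {R : realType} (tau t : R).
Local Notation mu := (@lebesgue_measure R).
Local Notation V := (sextic_potential tau t).

Lemma weightE x : weight tau t x = expR (- V.[x]).
Proof. by rewrite /weight /sextic_potential !hornerE; congr expR; ring. Qed.

Lemma continuous_poly_weight (p : {poly R}) :
  continuous (fun x => p.[x] * weight tau t x).
Proof.
move=> x; apply: continuousM; first exact: continuous_horner.
rewrite (_ : weight tau t = expR \o (fun y => - V.[y])); last first.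
  by apply/funext => y; rewrite weightE.
apply: continuous_comp; last exact: continuous_expR.
by apply: continuousN; exact: continuous_horner.
Qed.

Lemma is_derive_poly_weight (p : {poly R}) x :
  is_derive x (1 : R) (fun y => p.[y] * weight tau t y)
    ((p^`() - p * V^`()).[x] * weight tau t x).
Proof.
rewrite (_ : (fun y => _) = horner p * (expR \o (- horner V))); last first.
  by apply/funext => y; rewrite /= weightE.
have dw : is_derive x (1 : R) (expR \o (- horner V)) (expR (- V.[x]) * - V^`().[x]).
  by apply: is_derive1_comp; apply: is_deriveN; exact: is_derive_poly.
have := is_deriveM (is_derive_poly p x) dw.
have scaleE (a c : R) : a *: c = a * c by [].
move=> /is_derive_eq; apply; rewrite /= -weightE hornerD hornerN hornerM !scaleE; ring.
Qed.

Lemma poly_weight_le_gauss (p : {poly R}) :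
  exists2 K, 0 <= K & forall x, `|p.[x] * weight tau t x| <= K * gauss_fun x.
Proof.
have [C boundC] := cubic_bounded_above tau (t + (size p)%:R + 1).
have c_ge0 : 0 <= \sum_(i < size p) `|p`_i| by rewrite sumr_ge0.
exists ((\sum_(i < size p) `|p`_i|) * expR C) => [|x].
  by rewrite mulr_ge0 ?expR_ge0.
rewrite normrM [`|weight _ _ _|]ger0_norm ?expR_ge0 //.
apply: le_trans (ler_wpM2r (expR_ge0 _) (norm_horner_le_expR p x)) _.
rewrite -!mulrA ler_wpM2l // /weight /gauss_fun -!expRD ler_expR.
have := boundC _ (sqr_ge0 x).
have -> : (x ^+ 2) ^+ 3 = x ^+ 6 by rewrite -exprM.
have -> : (x ^+ 2) ^+ 2 = x ^+ 4 by rewrite -exprM.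
lra.
Qed.

Lemma measurable_poly_weight (p : {poly R}) :
  measurable_fun [set: R] (EFin \o (fun x => p.[x] * weight tau t x)).
Proof.
by apply/measurable_EFinP; exact: continuous_measurable_fun (continuous_poly_weight p).
Qed.

Lemma integrable_poly_weight (p : {poly R}) :
  mu.-integrable [set: R] (EFin \o (fun x => p.[x] * weight tau t x)).
Proof.
have [K K_ge0 bound] := poly_weight_le_gauss p.
have int_Kgauss : mu.-integrable [set: R] (fun x => (K%:E * (EFin \o gauss_fun) x)%E).
  by apply: integrableZl => //; exact: integrableT_gauss.
apply: le_integrable int_Kgauss => //; first exact: measurable_poly_weight.
by move=> x _; rewrite /= lee_fin (ger0_norm (mulr_ge0 K_ge0 (gauss_fun_ge0 x))).
Qed.

Lemma cvg_poly_weight (p : {poly R}) :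
  p.[x] * weight tau t x @[x --> +oo] --> 0 /\
  p.[x] * weight tau t x @[x --> -oo] --> 0.
Proof.
have [K _ bound] := poly_weight_le_gauss p.
split; apply: (@norm_le_cvg0 R _ _ _ _ _ bound); rewrite -(mulr0 K);
  apply: cvgMl_tmp; [exact: cvg_gauss_fun | exact: cvgNy_gauss_fun].
Qed.

Definition weighted_integral (p : {poly R}) : R :=
  Rintegral mu [set: R] (fun x => p.[x] * weight tau t x).

Lemma weighted_integral_is_linear : linear_for *%R weighted_integral.
Proof.
move=> a p q; rewrite /weighted_integral.
transitivity (Rintegral mu [set: R] (fun x => (a *: p).[x] * weight tau t x)
              + Rintegral mu [set: R] (fun x => q.[x] * weight tau t x)).
  rewrite -RintegralD //; try exact: integrable_poly_weight.
  by apply: eq_Rintegral => x _; rewrite hornerD mulrDl.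
rewrite -RintegralZl //; last exact: integrable_poly_weight.
by congr (_ + _); apply: eq_Rintegral => x _; rewrite hornerZ mulrA.
Qed.

HB.instance Definition _ :=
  GRing.isLinear.Build R {poly R} R _ weighted_integral weighted_integral_is_linear.

Lemma weighted_integral_deriv (p : {poly R}) :
  weighted_integral p^`() = weighted_integral (p * V^`()).
Proof.
apply/eqP; rewrite -subr_eq0 -linearB /=; apply/eqP.
rewrite /weighted_integral /Rintegral.
have [cvgy cvgNy] := cvg_poly_weight p.
rewrite (integral_derivative_eq0 _ _ (is_derive_poly_weight p)) //.
- exact: continuous_poly_weight.
- exact: integrable_poly_weight.
Qed.

Lemma weight_ge_unit_itv x : 0 <= x <= 1 ->
  expR (- (1 + `|tau| + `|t|)) <= weight tau t x.
Proof.
move=> /andP[x_ge0 x_le1]; rewrite /weight ler_expR.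
have x2_le1 : x ^+ 2 <= 1 by rewrite expr_le1.
have x4_le1 : x ^+ 4 <= 1 by rewrite expr_le1.
have x6_le1 : x ^+ 6 <= 1 by rewrite expr_le1.
have x2_ge0 : 0 <= x ^+ 2 by rewrite exprn_ge0.
have x4_ge0 : 0 <= x ^+ 4 by rewrite exprn_ge0.
have tau_ge : - `|tau| <= tau by rewrite lerNl -normrN ler_norm.
have t_ge : - `|t| <= t by rewrite lerNl -normrN ler_norm.
have := normr_ge0 tau; have := normr_ge0 t; nra.
Qed.

Lemma weighted_integral1_gt0 : 0 < weighted_integral 1.
Proof.
rewrite /weighted_integral /Rintegral.
have /fin_numPlt/andP[_ int_lty] :=
  integrable_fin_num measurableT (integrable_poly_weight 1).
apply: fine_gt0; rewrite int_lty andbT.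
pose c := expR (- (1 + `|tau| + `|t|)).
apply: (@lt_le_trans _ _ (\int[mu]_(x in `[0%R, 1%R]) (cst c%:E) x)%E).
  rewrite integral_cst //= lebesgue_measure_itv /= lte_fin ltr01 oppr0 adde0 mule1.
  by rewrite lte_fin expR_gt0.
apply: (@le_trans _ _ (\int[mu]_(x in `[0%R, 1%R]) ((1%:P).[x] * weight tau t x)%:E)%E).
  apply: ge0_le_integral => //.
  - by move=> x _; rewrite lee_fin expR_ge0.
  - exact: measurable_funTS (measurable_poly_weight 1).
  - by move=> x; rewrite /= in_itv /= hornerC mul1r lee_fin => /weight_ge_unit_itv.
apply: ge0_subset_integral => //; first exact: measurable_poly_weight.
by move=> x _; rewrite hornerC mul1r lee_fin expR_ge0.
Qed.

End SexticWeight.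

Theorem theorem4p2 (R : realType) (tau t : R) (P : nat -> {poly R})
  (beta : nat -> R) :
  monic_OPS tau t P ->
  recurrence_coeffs P beta ->
  (forall n, (1 <= n)%N -> 0 < beta n) ->
  forall n : nat, (1 <= n)%N -> forall x : R,
    let An := beta n * (6 * x ^+ 4 - 4 * tau * x ^+ 2 - 2 * t
                        + (6 * x ^+ 2 - 4 * tau) * (beta n + beta n.+1))
              + 6 * beta n * (beta n * (beta n.-1 + beta n + beta n.+1)
                              + beta n.+1 * (beta n + beta n.+1 + beta n.+2)) in
    let Bn := beta n * (6 * x ^+ 3 - 4 * tau * x
                        + 6 * x * (beta n.-1 + beta n + beta n.+1)) in
    (P n)^`().[x] = - Bn * (P n).[x] + An * (P n.-1).[x].
Proof.
move=> [P_monic_size P_orth] [beta0 [P1 P_rec]] beta_gt0 [//|m] _ x /=.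
have L_orth i j : i <> j -> weighted_integral tau t (P i * P j) = 0.
  move=> /P_orth orth_ij; rewrite /weighted_integral /Rintegral.
  by under eq_integral do rewrite hornerM; rewrite orth_ij.
rewrite (@ladder_identity _ tau t (weighted_integral tau t) P beta
  (weighted_integral_deriv tau t) (fun i => (P_monic_size i).1)
  (fun i => (P_monic_size i).2) L_orth (weighted_integral1_gt0 tau t)
  beta0 P1 P_rec beta_gt0).
rewrite /ladderA /ladderB.
by rewrite !(hornerD, hornerN, hornerM, hornerZ, hornerXn, hornerX, hornerC); ring.
Qed.
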